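(* Let $n,m\ge 1$, $V_{th}>0$, $\Delta t_d>0$, $\mathbf{W}\in\mathbb{R}^{n\times n}$, $\mathbf{F}\in\mathbb{R}^{n\times m}$, $\mathbf{b}\in\mathbb{R}^n$. Consider a feedback spiking neural network of $n$ neurons with the continuous integrate-and-fire (IF) model, whose membrane potentials $\mathbf{u}(t)\in\mathbb{R}^n$ evolve as $$\frac{\mathrm{d}\mathbf{u}}{\mathrm{d}t}=\mathbf{W}\mathbf{s}(t-\Delta t_d)+\mathbf{F}\mathbf{x}(t)+\mathbf{b}-V_{th}\mathbf{s}(t),$$ where $\mathbf{x}(t)\in\mathbb{R}^m$ is the input and $\mathbf{s}(t)$ is the vector of output spike trains (sums of Dirac deltas at the times a neuron's potential reaches $V_{th}$, after which it is reduced by $V_{th}$). Let $\mathbf{a}(t)=\frac1t\int_0^t\mathbf{s}(\tau)\,\mathrm{d}\tau$ be the average firing rates and $\overline{\mathbf{x}}(t)=\frac1t\int_0^t\mathbf{x}(\tau)\,\mathrm{d}\tau$ the average inputs. Let $\mathbf{u}^+(t)\in\mathbb{R}^n$ denote the (positive) part of the membrane potential for which $$\mathbf{a}(t)=\mathrm{ReLU}\!\left(\frac{1}{V_{th}}\left(\frac{t-\Delta t_d}{t}\mathbf{W}\mathbf{a}(t-\Delta t_d)+\mathbf{F}\overline{\mathbf{x}}(t)+\mathbf{b}-\frac{\mathbf{u}^+(t)}{t}\right)\right)$$ holds. Suppose that $\overline{\mathbf{x}}(t)\to\mathbf{x}^*$ as $t\to\infty$, and that there exist constants $c$ and $\gamma<1$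 such that $|\mathbf{u}^+_i(t)|\le c$ for all $i,t$ and $\|\mathbf{W}\|_2\le\gamma V_{th}$. Then $\mathbf{a}(t)$ converges as $t\to\infty$ to a point $\mathbf{a}^*$ satisfying $$\mathbf{a}^*=\mathrm{ReLU}\!\left(\frac{1}{V_{th}}\left(\mathbf{W}\mathbf{a}^*+\mathbf{F}\mathbf{x}^*+\mathbf{b}\right)\right).$$
   Context: $\mathrm{ReLU}(x)=\max(x,0)$ applied elementwise; $\|\cdot\|_2$ is the spectral (operator 2-) norm. In the paper the membrane potential is decomposed as $\mathbf{u}_i(t)=\mathbf{u}^-_i(t)+\mathbf{u}^+_i(t)$, where $\frac1t\mathbf{u}^-_i(t)=\min(v_i(t),0)$ with $v(t)=\frac{t-\Delta t_d}{t}\mathbf{W}\mathbf{a}(t-\Delta t_d)+\mathbf{F}\overline{\mathbf{x}}(t)+\mathbf{b}$ is the accumulated negative term, and $\mathbf{u}^+(t)$ is the remainder; with this decomposition the displayed ReLU relation for $\mathbf{a}(t)$ holds. *)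

From HB Require Import structures.
From mathcomp Require Import all_boot all_order all_algebra.
From mathcomp Require Import all_classical all_reals all_analysis.
Set Implicit Arguments. Unset Strict Implicit. Unset Printing Implicit Defensive.
Import Order.TTheory GRing.Theory Num.Theory.
Import numFieldNormedType.Exports.
Local Open Scope classical_set_scope.
Local Open Scope ring_scope.

Section Defs.
Variable R : realType.

Definition relu_mx (k l : nat) (v : 'M[R]_(k, l)) : 'M[R]_(k, l) :=
  map_mx (fun r => Num.max r 0) v.

Definition vnorm2 (k : nat) (v : 'cV[R]_k) : R :=
  Num.sqrt (\sum_(i < k) (v i 0) ^+ 2).

Definition opnorm2 (k l : nat) (W : 'M[R]_(k, l)) : R :=
  sup [set vnorm2 (W *m v) / vnorm2 v | v in [set v : 'cV[R]_l | v != 0]].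

(* average firing rates a(t) = (1/t) \int_0^t s = N(t)/t, where N i t is the
   number of spikes emitted by neuron i up to time t *)
Definition rate (k : nat) (N : 'I_k -> R -> nat) (t : R) : 'cV[R]_k :=
  \col_i ((N i t)%:R / t).

Definition avg_input (k : nat) (x : R -> 'cV[R]_k) (t : R) : 'cV[R]_k :=
  \col_j (t^-1 * \int[@lebesgue_measure R]_(tau in `[0, t]) x tau j 0).

End Defs.

From HB Require Import structures.
From mathcomp Require Import all_boot all_order all_algebra.
From mathcomp Require Import all_classical all_reals all_analysis.
From mathcomp Require Import ring lra.
Import Order.TTheory GRing.Theory Num.Theory.
Import numFieldNormedType.Exports.
Local Open Scope classical_set_scope.
Local Open Scope ring_scope.

Set Implicit Arguments. Unset Strict Implicit. Unset Printing Implicit Defensive.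

(* Put g := ||W||_2 / V_th < 1.  Since ReLU is 1-Lipschitz, the steady-state
   map a |-> ReLU((W a + F x* + b) / V_th) is a g-contraction for the Euclidean
   norm, so it has a fixed point a* (Banach).  Comparing the rate equation at
   time t with the fixed-point equation bounds the error e(t) = ||a(t) - a*||_2
   by the delayed recursion e(t) <= g e(t - dt) + eps(t), where
   eps(t) = O(1/t) + O(|xbar(t) - x*|) tends to 0 because u+ is bounded.
   On a window [S, S + dt] the rates are bounded (spike counts are monotone),
   and iterating the recursion from that window, with eps <= E beyond S, gives
   e(t) <= g^j (M + E/(1-g)) + E/(1-g) for t >= S + j dt, whence e(t) -> 0. *)

Section EuclideanNorm.
Variables (R : realType) (k : nat).
Implicit Types (u v : 'cV[R]_k) (f h : 'I_k -> R).

Let sumsq_ge0 f : 0 <= \sum_i f i ^+ 2.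
Proof. by apply: sumr_ge0 => i _; exact: sqr_ge0. Qed.

Let sumsq_eq0 f : \sum_i f i ^+ 2 = 0 -> forall i, f i = 0.
Proof.
move=> /psumr_eq0P sum0 i; apply/eqP; rewrite -sqrf_eq0; apply/eqP.
by apply: sum0 => // j _; exact: sqr_ge0.
Qed.

Lemma vnorm2_ge0 v : 0 <= vnorm2 v.
Proof. exact: sqrtr_ge0. Qed.

Lemma vnorm2_0 : vnorm2 (0 : 'cV[R]_k) = 0.
Proof. by rewrite /vnorm2 big1 ?sqrtr0 // => i _; rewrite mxE expr0n. Qed.

Lemma vnorm2_eq0 v : vnorm2 v = 0 -> v = 0.
Proof.
move=> /eqP; rewrite sqrtr_eq0 => sum_le0.
have /sumsq_eq0 v0 : \sum_i v i 0 ^+ 2 = 0.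
  by apply/eqP; rewrite eq_le sum_le0 sumsq_ge0.
by apply/matrixP => i j; rewrite ord1 mxE v0.
Qed.

Lemma vnorm2Z a v : vnorm2 (a *: v) = `|a| * vnorm2 v.
Proof.
rewrite /vnorm2 -sqrtr_sqr -sqrtrM ?sqr_ge0 // mulr_sumr.
by congr Num.sqrt; apply: eq_bigr => i _; rewrite mxE exprMn.
Qed.

Lemma vnorm2N v : vnorm2 (- v) = vnorm2 v.
Proof. by rewrite -scaleN1r vnorm2Z normrN normr1 mul1r. Qed.

Lemma vnorm2_entry_le v i : `|v i 0| <= vnorm2 v.
Proof.
rewrite /vnorm2 -sqrtr_sqr ler_sqrt ?sumsq_ge0 // (bigD1 i) //= lerDl.
by apply: sumr_ge0 => j _; exact: sqr_ge0.
Qed.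

Lemma vnorm2_le_sum v : vnorm2 v <= \sum_i `|v i 0|.
Proof.
have sum_ge0 : 0 <= \sum_i `|v i 0| by exact: sumr_ge0.
rewrite -(ger0_norm sum_ge0) -sqrtr_sqr ler_sqrt ?sqr_ge0 // expr2 mulr_sumr.
apply: ler_sum => i _; rewrite -real_normK ?num_real // expr2 ler_wpM2r //.
by rewrite (bigD1 i) //= lerDl sumr_ge0.
Qed.

Lemma mx_norm_le_vnorm2 v : `|v| <= vnorm2 v.
Proof.
rewrite [`|v|]mx_normrE; apply: bigmax_le => [|[i j] _]; first exact: vnorm2_ge0.
by rewrite ord1; exact: vnorm2_entry_le.
Qed.

Lemma vnorm2_le_mx_norm v : vnorm2 v <= k%:R * `|v|.
Proof.
apply: le_trans (vnorm2_le_sum v) _.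
rewrite -[k in k%:R]card_ord mulr_natl -sumr_const; apply: ler_sum => i _.
by rewrite [`|v|]mx_normrE; exact: (le_bigmax _ _ (i, 0)).
Qed.

Lemma cauchy_schwarz_sum f h :
  (\sum_i f i * h i) ^+ 2 <= (\sum_i f i ^+ 2) * (\sum_i h i ^+ 2).
Proof.
set A := \sum_i f i ^+ 2; set B := \sum_i h i ^+ 2; set C := \sum_i f i * h i.
have [B0|] := eqVneq B 0.
  by rewrite /C big1 ?expr0n ?B0 ?mulr0 // => i _; rewrite (sumsq_eq0 B0) mulr0.
rewrite neq_lt ltNge sumsq_ge0 /= => B_gt0.
have : 0 <= \sum_i (B * f i - C * h i) ^+ 2 by exact: sumsq_ge0.
have expand i : (B * f i - C * h i) ^+ 2 =
    B ^+ 2 * f i ^+ 2 - 2 * B * C * (f i * h i) + C ^+ 2 * h i ^+ 2 by ring.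
rewrite (eq_bigr _ (fun i _ => expand i)) big_split sumrB /= -!mulr_sumr -/A -/B -/C.
have -> : B ^+ 2 * A - 2 * B * C * C + C ^+ 2 * B = B * (A * B - C ^+ 2) by ring.
by rewrite pmulr_rge0 // subr_ge0.
Qed.

Lemma ler_vnorm2D u v : vnorm2 (u + v) <= vnorm2 u + vnorm2 v.
Proof.
set A := \sum_i u i 0 ^+ 2; set B := \sum_i v i 0 ^+ 2.
set C := \sum_i u i 0 * v i 0.
have [A0 B0] : 0 <= A /\ 0 <= B by split; exact: sumsq_ge0.
have C_le : C <= Num.sqrt A * Num.sqrt B.
  rewrite -sqrtrM // (le_trans (ler_norm C)) // -sqrtr_sqr ler_sqrt ?mulr_ge0 //.
  exact: cauchy_schwarz_sum.
have sum_ge0 : 0 <= vnorm2 u + vnorm2 v by rewrite addr_ge0 ?vnorm2_ge0.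
rewrite -(ger0_norm sum_ge0) -sqrtr_sqr ler_sqrt ?sqr_ge0 //.
have expand i : (u + v) i 0 ^+ 2 = u i 0 ^+ 2 + 2 * (u i 0 * v i 0) + v i 0 ^+ 2.
  by rewrite mxE; ring.
rewrite (eq_bigr _ (fun i _ => expand i)) !big_split /= -mulr_sumr -/A -/B -/C.
rewrite sqrrD /vnorm2 -/A -/B !sqr_sqrtr //; lra.
Qed.

Lemma ler_vnorm2B u v : vnorm2 (u - v) <= vnorm2 u + vnorm2 v.
Proof. by rewrite -(vnorm2N v); exact: ler_vnorm2D. Qed.

End EuclideanNorm.

Section LinearMaps.
Variables (R : realType) (k l : nat) (A : 'M[R]_(k, l)).

Lemma vnorm2_gt0 (v : 'cV[R]_l) : v != 0 -> 0 < vnorm2 v.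
Proof.
by move=> v0; rewrite lt_def vnorm2_ge0 andbT; apply: contra_neq v0; exact: vnorm2_eq0.
Qed.

Lemma vnorm2_mulmx_le_l1 v :
  vnorm2 (A *m v) <= (\sum_i \sum_j `|A i j|) * vnorm2 v.
Proof.
apply: le_trans (vnorm2_le_sum _) _; rewrite mulr_suml; apply: ler_sum => i _.
rewrite mxE (le_trans (ler_norm_sum _ _ _)) // mulr_suml; apply: ler_sum => j _.
by rewrite normrM ler_wpM2l // vnorm2_entry_le.
Qed.

Let ratios := [set vnorm2 (A *m v) / vnorm2 v | v in [set v : 'cV[R]_l | v != 0]].

Let ratios_ub : has_ubound ratios.
Proof.
exists (\sum_i \sum_j `|A i j|) => _ [v /= v0 <-].
by rewrite ler_pdivrMr ?vnorm2_gt0 // vnorm2_mulmx_le_l1.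
Qed.

Lemma opnorm2_ge0 : 0 <= opnorm2 A.
Proof.
rewrite /opnorm2 -/ratios; have [->|/set0P[r ratio_r]] := eqVneq ratios set0.
  by rewrite sup0.
apply: le_trans (ub_le_sup ratios_ub ratio_r); case: ratio_r => v _ <-.
by rewrite divr_ge0 ?vnorm2_ge0.
Qed.

Lemma vnorm2_mulmx_le v : vnorm2 (A *m v) <= opnorm2 A * vnorm2 v.
Proof.
have [->|v0] := eqVneq v 0; first by rewrite mulmx0 !vnorm2_0 mulr0.
rewrite -ler_pdivrMr ?vnorm2_gt0 //; apply: (ub_le_sup ratios_ub).
by exists v.
Qed.

End LinearMaps.

Section Relu.
Variable R : realType.

Lemma relu_mx_lipschitz k (u v : 'cV[R]_k) :
  vnorm2 (relu_mx u - relu_mx v) <= vnorm2 (u - v).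
Proof.
rewrite ler_sqrt; last by apply: sumr_ge0 => i _; exact: sqr_ge0.
apply: ler_sum => i _; rewrite !mxE; move: (u i 0) (v i 0) => x y.
case: (leP x 0) => x0; case: (leP y 0) => y0.
- by rewrite subrr expr0n sqr_ge0.
- have : 0 <= - x * (2 * y - x) by apply: mulr_ge0; lra.
  nra.
- have : 0 <= x * (x - 2 * y) by apply: mulr_ge0; lra.
  nra.
- by [].
Qed.

Lemma relu_affine_lipschitz k l (V : R) (A : 'M[R]_(k, l)) u v p q : 0 < V ->
  vnorm2 (relu_mx (V^-1 *: (A *m u + p)) - relu_mx (V^-1 *: (A *m v + q)))
    <= V^-1 * (opnorm2 A * vnorm2 (u - v) + vnorm2 (p - q)).
Proof.
move=> V_gt0; apply: le_trans (relu_mx_lipschitz _ _) _; rewrite -scalerBr.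
have -> : A *m u + p - (A *m v + q) = A *m (u - v) + (p - q).
  by rewrite mulmxBr opprD addrACA.
rewrite vnorm2Z ger0_norm ?invr_ge0 ?(ltW V_gt0) // ler_wpM2l //.
  by rewrite invr_ge0 ltW.
by apply: le_trans (ler_vnorm2D _ _) _; rewrite lerD2r vnorm2_mulmx_le.
Qed.

End Relu.

Lemma vnorm2_dist_cvg0 (R : realType) (I : Type) (F : set_system I) (FF : Filter F)
    k (f : I -> 'cV[R]_k) (l : 'cV[R]_k) :
  vnorm2 (f t - l) @[t --> F] --> 0 -> f t @[t --> F] --> l.
Proof.
move=> dist_cvg0; apply/subr_cvg0/norm_cvg0P.
apply: (squeeze_cvgr _ (cvg_cst 0) dist_cvg0).
by near=> t; rewrite normr_ge0 mx_norm_le_vnorm2.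
Unshelve. all: by end_near.
Qed.

Lemma exists_geometric_lt (R : realType) (g B r : R) :
  0 <= g -> g < 1 -> 0 < r -> exists j, g ^+ j * B < r.
Proof.
move=> g_ge0 g_lt1 r_gt0; have [B_le0|B_gt0] := leP B 0.
  by exists 0%N; rewrite expr0 mul1r (le_lt_trans B_le0).
have /cvg_expr/cvgrPdist_lt : `|g| < 1 by rewrite ger0_norm.
move=> /(_ (r / B)); rewrite divr_gt0 // => /(_ isT) [j _ /(_ j (leqnn j))].
rewrite sub0r normrN ger0_norm ?exprn_ge0 // ltr_pdivlMr // => gj_lt.
by exists j.
Qed.

(* Matrices get their complete and normed structures in different files, and
   their join, needed by banach_fixed_point, is not declared there. *)
HB.instance Definition _ (R : realType) (m n : nat) := Complete.on 'M[R]_(m, n).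

Section ContractionFixedPoint.
Variables (R : realType) (k : nat) (T : 'cV[R]_k -> 'cV[R]_k) (g : R).
Hypotheses (g_ge0 : 0 <= g) (g_lt1 : g < 1)
  (T_contraction : forall u v, vnorm2 (T u - T v) <= g * vnorm2 (u - v)).

Lemma iter_contraction j u v :
  vnorm2 (iter j T u - iter j T v) <= g ^+ j * vnorm2 (u - v).
Proof.
elim: j => [|j IH]; first by rewrite expr0 mul1r.
by rewrite exprS -mulrA (le_trans (T_contraction _ _)) // ler_wpM2l.
Qed.

(* The norm of 'cV_k is the sup norm, for which T itself need not be a
   contraction; a high enough iterate of T is one. *)
Lemma contraction_fixed_point : exists a, T a = a.
Proof.
have [j gj_small] := exists_geometric_lt (k%:R + 1) g_ge0 g_lt1 ltr01.
have gj_ge0 : 0 <= g ^+ j * k%:R by rewrite mulr_ge0 ?exprn_ge0.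
have contr : is_contraction ('totalfun_setT (iter j T)).
  exists (NngNum gj_ge0); split=> [|[u v] _ /=].
    by apply: le_lt_trans gj_small; rewrite ler_wpM2l ?exprn_ge0 ?lerDl.
  apply: le_trans (mx_norm_le_vnorm2 _) _.
  apply: le_trans (iter_contraction _ _ _) _.
  by rewrite -mulrA ler_wpM2l ?exprn_ge0 ?vnorm2_le_mx_norm.
have [a _ a_fix] := banach_fixed_point contr closedT (ex_intro _ 0 I).
exists a; apply/eqP; rewrite -subr_eq0; apply/eqP/vnorm2_eq0.
have T_a_fix : iter j T (T a) = T a by rewrite -iterSr iterS -a_fix.
have := iter_contraction j (T a) a; rewrite T_a_fix -a_fix.
have gj_lt1 : g ^+ j < 1.
  by apply: le_lt_trans gj_small; rewrite ler_peMr ?exprn_ge0 ?lerDr.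
have := vnorm2_ge0 (T a - a); nra.
Qed.

End ContractionFixedPoint.

Section DelayedRecursion.
Variables (R : realType) (e : R -> R) (g d : R).
Hypotheses (g_ge0 : 0 <= g) (g_lt1 : g < 1) (d_gt0 : 0 < d).

Section Window.
Variables (S M E : R).
Hypotheses (M_ge0 : 0 <= M) (E_ge0 : 0 <= E)
  (e_rec : forall t, S + d <= t -> e t <= g * e (t - d) + E)
  (e_win : forall t, S <= t <= S + d -> e t <= M).

Let L := E / (1 - g).

Let L_fixed : g * L + E = L.
Proof. by rewrite /L; field; rewrite subr_eq0 eq_sym lt_eqF. Qed.

Let L_ge0 : 0 <= L.
Proof. by rewrite divr_ge0 // subr_ge0 ltW. Qed.

Lemma delay_recursion_ub t : S <= t -> e t <= M + L.
Proof.
have ub_upto j : forall t, S <= t <= S + j.+1%:R * d -> e t <= M + L.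
  elim: j => [|j IH] {}t /andP[St tS].
    by rewrite (le_trans (e_win _)) ?lerDl // St; rewrite mul1r in tS.
  have [tSd|tSd] := leP t (S + d); first by rewrite (le_trans (e_win _)) ?lerDl ?St.
  apply: le_trans (e_rec (ltW tSd)) _.
  have /(ler_wpM2l g_ge0) : e (t - d) <= M + L.
    by apply: IH; apply/andP; split; move: tS; rewrite !mulrSr; lra.
  have : g * M <= M by rewrite ler_piMl // ltW.
  have := L_fixed; lra.
move=> St; have ratio_ge0 : 0 <= (t - S) / d by rewrite divr_ge0 ?subr_ge0 // ltW.
have := archi_boundP ratio_ge0; rewrite ltr_pdivrMr //.
move: (Num.Def.archi_bound _) => j tj; apply: (ub_upto j); rewrite ltrBlDl in tj.
by rewrite St mulrSr mulrDl mul1r addrA (le_trans (ltW tj)) // lerDl ltW.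
Qed.

Lemma delay_recursion_bound j t :
  S + j%:R * d <= t -> e t <= g ^+ j * (M + L) + L.
Proof.
elim: j t => [|j IH] t.
  by rewrite mul0r addr0 expr0 mul1r => /delay_recursion_ub; have := L_ge0; lra.
rewrite mulrSr => tj.
have jd_ge0 : 0 <= j%:R * d by rewrite mulr_ge0 // ltW.
apply: le_trans (e_rec _) _; first lra.
have /(ler_wpM2l g_ge0) : e (t - d) <= g ^+ j * (M + L) + L by apply: IH; lra.
by rewrite exprS -mulrA; have := L_fixed; lra.
Qed.

End Window.

Lemma delay_recursion_cvg0 (eps : R -> R) :
  (forall t, 0 <= e t) ->
  (\forall t \near +oo, e t <= g * e (t - d) + eps t) ->
  (\forall S \near +oo, exists M, forall t, S <= t <= S + d -> e t <= M) ->
  eps t @[t --> +oo] --> 0 -> e t @[t --> +oo] --> 0.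
Proof.
move=> e_ge0 e_rec e_win eps_cvg0; apply/cvgrPdist_lt => r r_gt0.
pose E := r * (1 - g) / 4.
have E_gt0 : 0 < E by rewrite divr_gt0 // mulr_gt0 // subr_gt0.
have [S0 [_ S0_ok]] : \forall t \near +oo, [/\ e t <= g * e (t - d) + eps t,
    eps t <= E & exists M, forall s, t <= s <= t + d -> e s <= M].
  near=> t; split; near: t.
  - exact: e_rec.
  - exact: cvgr_le eps_cvg0 _ E_gt0.
  - exact: e_win.
set S := S0 + 1; have S0S : S0 < S by rewrite ltrDl.
have [_ _ [M M_win]] := S0_ok S S0S.
have M'_ge0 : 0 <= Num.max M 0 by rewrite le_max lexx orbT.
have E_rec t : S + d <= t -> e t <= g * e (t - d) + E.
  move=> tSd; have S0t : S0 < t.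
    by apply: lt_le_trans S0S (le_trans _ tSd); rewrite lerDl ltW.
  by have [rec eps_le _] := S0_ok t S0t; lra.
have M'_win t : S <= t <= S + d -> e t <= Num.max M 0.
  by move=> /M_win; rewrite le_max => ->.
pose B := Num.max M 0 + E / (1 - g).
have [j gjB] := exists_geometric_lt B g_ge0 g_lt1 (divr_gt0 r_gt0 (ltr0n _ 2)).
have EL : E / (1 - g) = r / 4 by rewrite /E; field; rewrite subr_eq0 eq_sym lt_eqF.
near=> t; rewrite sub0r normrN ger0_norm //.
have t_big : S + j%:R * d <= t by near: t; apply: nbhs_pinfty_ge; rewrite num_real.
have := delay_recursion_bound M'_ge0 (ltW E_gt0) E_rec M'_win t_big.
rewrite -/B EL; lra.
Unshelve. all: by end_near.
Qed.

End DelayedRecursion.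

Lemma vnorm2_rate_le (R : realType) k (N : 'I_k -> R -> nat) (S T t : R) :
  (forall i s t, s <= t -> (N i s <= N i t)%N) -> 0 < S -> S <= t <= T ->
  vnorm2 (rate N t) <= \sum_i (N i T)%:R / S.
Proof.
move=> N_mono S_gt0 /andP[St tT]; have t_gt0 := lt_le_trans S_gt0 St.
apply: le_trans (vnorm2_le_sum _) _; apply: ler_sum => i _.
rewrite mxE ger0_norm ?divr_ge0 ?(ltW t_gt0) //.
apply: (@le_trans _ _ ((N i T)%:R / t)).
  by rewrite ler_wpM2r ?invr_ge0 ?(ltW t_gt0) // ler_nat N_mono.
by rewrite ler_wpM2l // lef_pV2 ?posrE.
Qed.

Section FeedbackNetwork.
Variables (R : realType) (n m : nat) (Vth dt c : R).
Variables (W : 'M[R]_n) (F : 'M[R]_(n, m)) (b : 'cV[R]_n).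
Variables (x : R -> 'cV[R]_m) (N : 'I_n -> R -> nat) (up : R -> 'cV[R]_n).
Variables (xstar : 'cV[R]_m) (astar : 'cV[R]_n).
Hypotheses (Vth_gt0 : 0 < Vth) (dt_gt0 : 0 < dt).
Hypothesis rate_relu : forall t, 0 < t ->
  rate N t = relu_mx (Vth^-1 *: (((t - dt) / t) *: (W *m rate N (t - dt))
                                 + F *m avg_input x t + b - t^-1 *: up t)).
Hypothesis up_bounded : forall i t, 0 < t -> `|up t i 0| <= c.
Hypothesis astar_fixed : astar = relu_mx (Vth^-1 *: (W *m astar + F *m xstar + b)).

(* The 1/t term collects the delay factor (t - dt)/t = 1 - dt/t and u+(t)/t. *)
Definition rate_error_source t := Vth^-1 *
  ((opnorm2 W * dt * vnorm2 astar + n%:R * c) / t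
   + (\sum_i \sum_j `|F i j|) * m%:R * `|avg_input x t - xstar|).

Lemma rate_error_rec t : dt <= t ->
  vnorm2 (rate N t - astar) <=
    opnorm2 W / Vth * vnorm2 (rate N (t - dt) - astar) + rate_error_source t.
Proof.
move=> dt_le_t; have t_gt0 := lt_le_trans dt_gt0 dt_le_t.
rewrite [in rate N t]rate_relu // [in X in _ - X]astar_fixed scalemxAr.
rewrite -2!addrA -[W *m astar + _ + _]addrA.
apply: le_trans (relu_affine_lipschitz _ _ _ _ _ Vth_gt0) _.
set a' := rate N (t - dt); set s := dt / t; set U := t^-1 *: up t.
have s_ge0 : 0 <= s by rewrite divr_ge0 ?ltW.
have s_le1 : s <= 1 by rewrite ler_pdivrMr // mul1r.
have state_le : vnorm2 ((t - dt) / t *: a' - astar)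
    <= vnorm2 (a' - astar) + s * vnorm2 astar.
  have -> : (t - dt) / t *: a' - astar = (1 - s) *: (a' - astar) - s *: astar.
    rewrite scalerBr -addrA -opprD -scalerDl subrK scale1r.
    by rewrite mulrBl divff ?gt_eqF.
  apply: le_trans (ler_vnorm2B _ _) _; rewrite !vnorm2Z !ger0_norm ?subr_ge0 //.
  by rewrite lerD2r ler_piMl ?vnorm2_ge0 // lerBlDr lerDl.
have input_le : vnorm2 (F *m avg_input x t + (b - U) - (F *m xstar + b))
    <= (\sum_i \sum_j `|F i j|) * m%:R * `|avg_input x t - xstar| + n%:R * c / t.
  have -> : F *m avg_input x t + (b - U) - (F *m xstar + b)
      = F *m (avg_input x t - xstar) - U.
    by rewrite mulmxBr opprD addrACA [b - U]addrC addrK.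
  apply: le_trans (ler_vnorm2B _ _) (lerD _ _).
    apply: le_trans (vnorm2_mulmx_le_l1 _ _) _.
    rewrite -mulrA ler_wpM2l ?vnorm2_le_mx_norm //.
    by apply: sumr_ge0 => i _; exact: sumr_ge0.
  have tV_ge0 : 0 <= t^-1 by rewrite invr_ge0 ltW.
  rewrite /U vnorm2Z ger0_norm // mulrC ler_wpM2r //.
  apply: le_trans (vnorm2_le_sum _) _; rewrite -[n in n%:R]card_ord mulr_natl.
  by rewrite -sumr_const; apply: ler_sum => i _; exact: up_bounded.
apply: le_trans (ler_wpM2l _ (lerD (ler_wpM2l (opnorm2_ge0 W) state_le) input_le)) _.
  by rewrite invr_ge0 ltW.
rewrite /rate_error_source /s le_eqVlt; apply/orP; left; apply/eqP.
by field; rewrite !gt_eqF.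
Qed.

Lemma rate_error_source_cvg0 :
  avg_input x t @[t --> +oo] --> xstar -> rate_error_source t @[t --> +oo] --> 0.
Proof.
move=> xbar_cvg.
have inv_cvg0 : t^-1 @[t --> +oo] --> (0 : R).
  apply/gtr0_cvgV0; last exact: cvg_id.
  by near=> t; near: t; apply: nbhs_pinfty_gt; rewrite num_real.
have dist_cvg0 : `|avg_input x t - xstar| @[t --> +oo] --> (0 : R).
  by rewrite -[0 : R](@normr0 _ 'cV[R]_m); apply: cvg_norm; apply/subr_cvg0.
rewrite -(mulr0 Vth^-1) -[0 in X in _ * X](addr0 0).
rewrite -[0 in X in X + _](mulr0 (opnorm2 W * dt * vnorm2 astar + n%:R * c)).
rewrite -[0 in X in _ + X](mulr0 ((\sum_i \sum_j `|F i j|) * m%:R)).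
exact: cvgMr (cvgD (cvgMr inv_cvg0) (cvgMr dist_cvg0)).
Unshelve. all: by end_near.
Qed.

End FeedbackNetwork.

Theorem theorem1 (R : realType) (n m : nat) (hn : (0 < n)%N) (hm : (0 < m)%N)
  (Vth dt : R) (hV : 0 < Vth) (hdt : 0 < dt)
  (W : 'M[R]_n) (F : 'M[R]_(n, m)) (b : 'cV[R]_n)
  (x : R -> 'cV[R]_m) (N : 'I_n -> R -> nat) (up : R -> 'cV[R]_n)
  (xstar : 'cV[R]_m) (c gamma : R)
  (hx_int : forall t, 0 < t -> forall j,
      (@lebesgue_measure R).-integrable `[0, t] (fun tau => (x tau j 0)%:E))
  (hN0 : forall i t, t <= 0 -> N i t = 0%N)
  (hNmono : forall i s t, s <= t -> (N i s <= N i t)%N)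
  (hrel : forall t, 0 < t ->
      rate N t = relu_mx (Vth^-1 *: (((t - dt) / t) *: (W *m rate N (t - dt))
                                      + F *m avg_input x t + b - t^-1 *: up t)))
  (hxbar : avg_input x t @[t --> +oo] --> xstar)
  (hup : forall i t, 0 < t -> `|up t i 0| <= c)
  (hgamma : gamma < 1) (hW : opnorm2 W <= gamma * Vth) :
  exists astar : 'cV[R]_n,
    rate N t @[t --> +oo] --> astar /\
    astar = relu_mx (Vth^-1 *: (W *m astar + F *m xstar + b)).
Proof.
set g := opnorm2 W / Vth.
have g_ge0 : 0 <= g by rewrite divr_ge0 ?opnorm2_ge0 ?ltW.
have g_lt1 : g < 1.
  by rewrite ltr_pdivrMr // mul1r (le_lt_trans hW) // gtr_pMl.
pose T v := relu_mx (Vth^-1 *: (W *m v + F *m xstar + b)).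
have T_contraction u v : vnorm2 (T u - T v) <= g * vnorm2 (u - v).
  rewrite /T -!addrA; apply: le_trans (relu_affine_lipschitz _ _ _ _ _ hV) _.
  by rewrite subrr vnorm2_0 addr0 mulrA [Vth^-1 * _]mulrC.
have [astar astar_fixed] := contraction_fixed_point g_ge0 g_lt1 T_contraction.
exists astar; split; last exact: esym astar_fixed.
apply: vnorm2_dist_cvg0.
apply: (delay_recursion_cvg0 g_ge0 g_lt1 hdt (fun t => vnorm2_ge0 _)).
- near=> t; apply: (rate_error_rec hV hdt hrel hup (esym astar_fixed)).
  by near: t; apply: nbhs_pinfty_ge; rewrite num_real.
- near=> s; exists (\sum_i (N i (s + dt))%:R / s + vnorm2 astar) => t ts.
  apply: le_trans (ler_vnorm2B _ _) _; rewrite lerD2r; apply: vnorm2_rate_le hNmono _ ts.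
  by near: s; apply: nbhs_pinfty_gt; rewrite num_real.
- exact: rate_error_source_cvg0.
Unshelve. all: by end_near.
Qed.
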